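(* Let $\delta>0$, let $\ell<\ell'<r'<r$ be real numbers and let $g:[\ell,r]\to\mathbb{R}$ satisfy $|g(x)+\frac12x^2|\leq\frac14\delta^2$ for all $x\in[\ell,r]$. Let $h_1$ and $h_2$ be the concave majorants of $g$ on $[\ell,r]$ and on $[\ell',r']$ respectively. Then $h_1(x)=h_2(x)$ for all $x\in[\ell'+3\delta,r'-3\delta]$.
   Context: The concave majorant of $g$ on an interval $I$ is $h(x_0)=\inf\{ax_0+b: ax+b\geq g(x)\text{ for all }x\in I\}$ for $x_0\in I$. *)

From HB Require Import structures.
From mathcomp Require Import all_boot all_order all_algebra.
From mathcomp Require Import all_classical all_reals.
Set Implicit Arguments. Unset Strict Implicit. Unset Printing Implicit Defensive.
Import Order.TTheory GRing.Theory Num.Theory.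
Local Open Scope ring_scope.
Local Open Scope classical_set_scope.

Definition concave_majorant (R : realType) (I : set R) (g : R -> R) (x0 : R) : R :=
  inf [set y : R | exists a b : R, (forall x, I x -> g x <= a * x + b) /\ y = a * x0 + b].

From HB Require Import structures.
From mathcomp Require Import all_boot all_order all_algebra.
From mathcomp Require Import all_classical all_reals.
From mathcomp Require Import ring lra.
Set Implicit Arguments. Unset Strict Implicit. Unset Printing Implicit Defensive.
Import Order.TTheory GRing.Theory Num.Theory.
Local Open Scope ring_scope.
Local Open Scope classical_set_scope.

(* Write q x = - x^2 / 2 and c = delta^2 / 4, so that g lies in the band
   [q - c, q + c].  Enlarging the interval only removes lines from the set
   whose infimum is the majorant, and the tangent to q at x0 lifted by c
   is admissible on both intervals, so only lines L with L x0 < q x0 + c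
   matter.  Such a line, if it dominates g on [l', r'], lies above q - c at
   x0 +- delta and below q + c at x0; as L - q is a parabola of curvature 1,
   it then stays above q + c at distance 2 delta from x0, hence above g on
   the whole of [l, r]. *)

Definition majorant_values (R : realType) (I : set R) (g : R -> R) (x0 : R) :
    set R :=
  [set y | exists a b : R, (forall x, I x -> g x <= a * x + b) /\ y = a * x0 + b].

Lemma subset_inf_eq_below (R : realType) (S T : set R) (v : R) :
  S v -> S `<=` T -> has_lbound T -> (forall y, T y -> y < v -> S y) ->
  inf S = inf T.
Proof.
move=> Sv ST lbT Tlt; have lbS : has_lbound S by apply: subset_has_lbound lbT.
apply/eqP; rewrite eq_le; apply/andP; split.
- apply: lb_le_inf; first by exists v; exact: ST.
  move=> y Ty; have [vy|yv] := leP v y; last exact/ge_inf/Tlt.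
  exact: le_trans (ge_inf lbS Sv) vy.
- apply: lb_le_inf; first by exists v.
  by move=> y /ST; exact: ge_inf.
Qed.

Lemma sub_majorant_values (R : realType) (I J : set R) (g : R -> R) (x0 : R) :
  I `<=` J -> majorant_values J g x0 `<=` majorant_values I g x0.
Proof. by move=> IJ _ [a [b [gJ ->]]]; exists a, b; split=> // x /IJ/gJ. Qed.

Lemma majorant_values_lbound (R : realType) (I : set R) (g : R -> R) (x0 : R) :
  I x0 -> has_lbound (majorant_values I g x0).
Proof. by move=> Ix0; exists (g x0) => _ [a [b [gI ->]]]; exact: gI. Qed.

Lemma lifted_tangent_majorant (R : realType) (I : set R) (g : R -> R) (c x0 : R) :
  (forall x, I x -> g x <= - (x ^+ 2 / 2) + c) ->
  majorant_values I g x0 (- (x0 ^+ 2 / 2) + c).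
Proof.
move=> gI; exists (- x0), (x0 ^+ 2 / 2 + c); split; last by lra.
move=> x /gI; have : 0 <= (x - x0) ^+ 2 by exact: sqr_ge0.
rewrite !expr2; nra.
Qed.

Lemma line_exits_band_above (R : realFieldType) (a b x0 u s : R) :
  2 <= s ->
  a * x0 + b + x0 ^+ 2 / 2 <= u ^+ 2 / 4 ->
  - (u ^+ 2 / 4) <= a * (x0 + u) + b + (x0 + u) ^+ 2 / 2 ->
  u ^+ 2 / 4 <= a * (x0 + s * u) + b + (x0 + s * u) ^+ 2 / 2.
Proof.
pose phi x := a * x + b + x ^+ 2 / 2.
rewrite -/(phi x0) -/(phi (x0 + u)) -/(phi (x0 + s * u)) => s_ge2 phi_x0 phi_x0u.
have three_point : phi (x0 + s * u) =
    s * phi (x0 + u) - (s - 1) * phi x0 + s * (s - 1) * u ^+ 2 / 2.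
  by rewrite /phi; field.
have s_ge0 : 0 <= s by lra.
have s1_ge0 : 0 <= s - 1 by lra.
have s2_ge0 : 0 <= s - 2 by lra.
have := ler_wpM2l s_ge0 phi_x0u; have := ler_wpM2l s1_ge0 phi_x0.
have := mulr_ge0 (mulr_ge0 s_ge0 s2_ge0) (sqr_ge0 u).
rewrite three_point; lra.
Qed.

Section BandAroundParabola.

Variables (R : realType) (delta l r : R) (g : R -> R).
Hypothesis g_band : forall x, l <= x <= r -> `|g x + x ^+ 2 / 2| <= delta ^+ 2 / 4.

Lemma g_band_le x : l <= x <= r -> g x <= - (x ^+ 2 / 2) + delta ^+ 2 / 4.
Proof. by move/g_band; rewrite ler_norml => /andP[_]; lra. Qed.

Lemma g_band_ge x : l <= x <= r -> - (x ^+ 2 / 2) - delta ^+ 2 / 4 <= g x.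
Proof. by move/g_band; rewrite ler_norml => /andP[+ _]; lra. Qed.

Lemma line_majorant_extends (l' r' x0 a b : R) : 0 < delta -> l <= l' -> r' <= r ->
  l' + 2 * delta <= x0 <= r' - 2 * delta ->
  a * x0 + b <= - (x0 ^+ 2 / 2) + delta ^+ 2 / 4 ->
  (forall x, l' <= x <= r' -> g x <= a * x + b) ->
  forall x, l <= x <= r -> g x <= a * x + b.
Proof.
move=> delta_gt0 ll' r'r /andP[x0_ge x0_le] Lx0 gL x xI.
have [x_in|x_out] := boolP (l' <= x <= r'); first exact: gL.
apply: le_trans (g_band_le xI) _.
suff [u [s [-> u2 s_ge2 Lx0u]]] : exists u s, [/\ x = x0 + s * u,
    u ^+ 2 = delta ^+ 2, 2 <= s & l' <= x0 + u <= r'].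
  have uI : l <= x0 + u <= r by case/andP: Lx0u => ? ?; apply/andP; split; lra.
  have top : a * x0 + b + x0 ^+ 2 / 2 <= u ^+ 2 / 4 by rewrite u2; lra.
  have bottom : - (u ^+ 2 / 4) <= a * (x0 + u) + b + (x0 + u) ^+ 2 / 2.
    by have := gL _ Lx0u; have := g_band_ge uI; rewrite u2; lra.
  by have := line_exits_band_above s_ge2 top bottom; rewrite u2; lra.
have delta_neq0 : delta != 0 by rewrite gt_eqF.
have [x_lt|x_gt] : x < l' \/ r' < x.
  by move: x_out; rewrite negb_and -!ltNge => /orP.
- exists (- delta), ((x0 - x) / delta); split.
  + by field.
  + by rewrite sqrrN.
  + by rewrite ler_pdivlMr //; lra.
  + by apply/andP; split; lra.
- exists delta, ((x - x0) / delta); split => //.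
  + by field.
  + by rewrite ler_pdivlMr //; lra.
  + by apply/andP; split; lra.
Qed.

End BandAroundParabola.

Theorem mainTheorem16 (R : realType) (delta l l' r' r : R) (g : R -> R) :
  0 < delta -> l < l' -> l' < r' -> r' < r ->
  (forall x, l <= x <= r -> `|g x + x ^+ 2 / 2| <= delta ^+ 2 / 4) ->
  forall x, l' + 3 * delta <= x <= r' - 3 * delta ->
    concave_majorant [set y | l <= y <= r] g x =
    concave_majorant [set y | l' <= y <= r'] g x.
Proof.
move=> delta_gt0 ll' _ r'r g_band x0 /andP[x0_ge x0_le].
have sub_I : [set y | l' <= y <= r'] `<=` [set y | l <= y <= r].
  by move=> y /andP[? ?]; apply/andP; split; lra.
apply: (@subset_inf_eq_below _ _ _ (- (x0 ^+ 2 / 2) + delta ^+ 2 / 4)).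
- by apply: lifted_tangent_majorant => x; exact: g_band_le.
- exact: sub_majorant_values.
- by apply: majorant_values_lbound; apply/andP; split; lra.
- move=> _ [a [b [gL ->]]] /ltW Lx0; exists a, b; split => //.
  apply: (line_majorant_extends g_band delta_gt0 (ltW ll') (ltW r'r) _ Lx0 gL).
  by apply/andP; split; lra.
Qed.
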